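(* Fix integers $T\ge 1$ and $1\le T_n\le T$, a number $\bar\epsilon_n>0$, and rates $q_n>0$, $q>0$. Define $\epsilon_n^1,\dots,\epsilon_n^T$ recursively by $$\epsilon_n^t=\begin{cases}\dfrac{\bar\epsilon_n-\sum_{\tau=1}^{t-1}\epsilon_n^\tau}{T-t+1}\left(\dfrac{q_n}{q}\right)^2, & t<T_n,\\[2ex] \dfrac{\bar\epsilon_n-\sum_{\tau=1}^{t-1}\epsilon_n^\tau}{T-t+1}, & t\ge T_n.\end{cases}$$ Then for $1\le t<T_n$, $$\epsilon_n^t=\frac{\bar\epsilon_n}{T-t+1}\left(\frac{q_n}{q}\right)^2\prod_{i=1}^{t-1}\left(1-\frac{1}{T-t+1+i}\left(\frac{q_n}{q}\right)^2\right),$$ and for $T_n\le t\le T$, $$\epsilon_n^t=\frac{\bar\epsilon_n}{T-T_n+1}\prod_{i=1}^{T_n-1}\left(1-\frac{1}{T-T_n+1+i}\left(\frac{q_n}{q}\right)^2\right).$$ (Empty products equal $1$.)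
   Context: In the paper's time-adaptive differentially private federated learning scheme, $\bar\epsilon_n$ is the total Rényi-DP privacy budget of client $n$, $T$ is the number of training rounds, $T_n$ is the round at which client $n$ transitions from a ''saving'' mode (sampling rate $q_n$) to a ''spending'' mode (sampling rate $q$), and $\epsilon_n^t$ is the Rényi-DP privacy spent by client $n$ in round $t$. *)

From mathcomp Require Import all_boot all_order all_algebra.
Set Implicit Arguments. Unset Strict Implicit. Unset Printing Implicit Defensive.
Import Order.TTheory GRing.Theory Num.Theory.
Local Open Scope ring_scope.

(* Rounds are indexed 1..T. [eps_prefix ... k] is the list
   [:: eps^1; ...; eps^k] produced by the recursion
   eps^t = (bar - sum_{tau<t} eps^tau)/(T-t+1) * (if t < Tn then (qn/q)^2 else 1). *)
Fixpoint eps_prefix (R : realFieldType) (T Tn : nat) (bar qn q : R) (k : nat)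
  : seq R :=
  match k with
  | 0%N => [::]
  | k'.+1 =>
      let prev := eps_prefix T Tn bar qn q k' in
      let t := k'.+1 in
      let base := (bar - \sum_(e <- prev) e) / (T - t + 1)%N%:R in
      rcons prev (if (t < Tn)%N then base * (qn / q) ^+ 2 else base)
  end.

Definition eps (R : realFieldType) (T Tn : nat) (bar qn q : R) (t : nat) : R :=
  nth 0 (eps_prefix T Tn bar qn q t) t.-1.

From mathcomp Require Import all_boot all_order all_algebra.
From mathcomp Require Import zify ring lra.
Set Implicit Arguments. Unset Strict Implicit. Unset Printing Implicit Defensive.
Import Order.TTheory GRing.Theory Num.Theory.
Local Open Scope ring_scope.

(* Let [B_k = bar - (eps^1 + ... + eps^k)] be the budget left after round [k]
   and [d_t = T - t + 1].  Round [t] spends the fraction [c_t / d_t] of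
   [B_(t-1)], with [c_t = (qn/q)^2] while saving and [c_t = 1] while spending,
   so [B_k = bar * prod_(s <= k) (1 - c_s / d_s)]; reversing the index of this
   product gives the saving-phase formula.  While spending,
   [eps^(t+1) = B_t / d_(t+1) = B_(t-1) (1 - 1/d_t) / (d_t - 1) = B_(t-1) / d_t
   = eps^t], so every spending round repeats [eps^Tn]. *)

Lemma prod_nat_shift (R : comPzRingType) (F : nat -> R) (T t : nat) :
  (t <= T)%N ->
  \prod_(1 <= s < t) F (T - s + 1)%N = \prod_(1 <= i < t) F (T - t + 1 + i)%N.
Proof.
move=> le_t_T; rewrite big_nat_rev /=; apply: eq_big_nat => i /andP[i_gt0 lt_i_t].
by have -> : (T - (1 + t - i.+1) + 1 = T - t + 1 + i)%N by lia.
Qed.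

Section BudgetRecursion.

Variables (R : realFieldType) (T Tn : nat) (bar qn q : R).

Local Notation prefix := (eps_prefix T Tn bar qn q).
Local Notation e := (eps T Tn bar qn q).

Definition budget (k : nat) : R := bar - \sum_(x <- prefix k) x.

Definition share (t : nat) : R :=
  ((T - t + 1)%N%:R)^-1 * (if (t < Tn)%N then (qn / q) ^+ 2 else 1).

Lemma size_eps_prefix k : size (prefix k) = k.
Proof. by elim: k => //= k IHk; rewrite size_rcons IHk. Qed.

Lemma eps_prefixS k : prefix k.+1 = rcons (prefix k) (e k.+1).
Proof. by rewrite /eps [in RHS]/= nth_rcons size_eps_prefix ltnn eqxx. Qed.

Lemma epsS k : e k.+1 = budget k * share k.+1.
Proof.
rewrite /eps /= nth_rcons size_eps_prefix ltnn eqxx /budget /share.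
by case: ifP => _; rewrite ?mulr1 ?expr2 ?mulrA.
Qed.

Lemma budgetS k : budget k.+1 = budget k * (1 - share k.+1).
Proof.
rewrite {1}/budget eps_prefixS -cats1 big_cat big_seq1 /= opprD addrA.
by rewrite -/(budget k) epsS mulrBr mulr1.
Qed.

Lemma budget_saving k : (k < Tn)%N ->
  budget k = bar * \prod_(1 <= s < k.+1) (1 - ((T - s + 1)%N%:R)^-1 * (qn / q) ^+ 2).
Proof.
elim: k => [|k IHk] lt_k_Tn; first by rewrite /budget big_nil subr0 big_geq ?mulr1.
by rewrite budgetS (IHk (ltnW lt_k_Tn)) [in RHS]big_nat_recr //= mulrA /share lt_k_Tn.
Qed.

Lemma eps_spendingS t : (0 < t)%N -> (Tn <= t)%N -> (t < T)%N -> e t.+1 = e t.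
Proof.
case: t => // k _ le_Tn_k lt_k_T.
rewrite epsS budgetS epsS /share !ifN -?leqNgt ?(leqW le_Tn_k) // !mulr1.
have -> : (T - k.+1 + 1 = (T - k.+2 + 1) + 1)%N by lia.
rewrite natrD; set d := (T - k.+2 + 1)%N%:R : R.
have d_gt0 : 0 < d by rewrite ltr0n addn1.
have d1_gt0 : 0 < d + 1 by lra.
by clearbody d; field; rewrite !gt_eqF.
Qed.

Lemma eps_spending t : (Tn <= t)%N -> (t <= T)%N -> (0 < Tn)%N -> e t = e Tn.
Proof.
elim: t => [|t IHt] le_Tn_t le_t_T Tn_gt0; first by case: Tn le_Tn_t Tn_gt0.
case: (ltngtP Tn t.+1) le_Tn_t => // [lt_Tn_t|-> //] _.
have t_gt0 : (0 < t)%N := leq_trans Tn_gt0 lt_Tn_t.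
by rewrite eps_spendingS // IHt // ltnW.
Qed.

Lemma eps_closed_form t : (0 < t)%N -> (t <= Tn)%N -> (Tn <= T)%N ->
  e t = bar * share t *
        \prod_(1 <= i < t) (1 - ((T - t + 1 + i)%N%:R)^-1 * (qn / q) ^+ 2).
Proof.
case: t => // k _ le_k_Tn le_Tn_T; rewrite epsS budget_saving // mulrAC.
by rewrite (prod_nat_shift (fun n => 1 - n%:R^-1 * (qn / q) ^+ 2)) //; lia.
Qed.

End BudgetRecursion.

Theorem mainTheorem1 (R : realFieldType) (T Tn : nat) (bar qn q : R) :
  (1 <= T)%N -> (1 <= Tn)%N -> (Tn <= T)%N ->
  0 < bar -> 0 < qn -> 0 < q ->
  (forall t : nat, (1 <= t)%N -> (t < Tn)%N ->
     eps T Tn bar qn q t =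
       bar / (T - t + 1)%N%:R * (qn / q) ^+ 2 *
       \prod_(1 <= i < t)
          (1 - ((T - t + 1 + i)%N%:R)^-1 * (qn / q) ^+ 2))
  /\
  (forall t : nat, (Tn <= t)%N -> (t <= T)%N ->
     eps T Tn bar qn q t =
       bar / (T - Tn + 1)%N%:R *
       \prod_(1 <= i < Tn)
          (1 - ((T - Tn + 1 + i)%N%:R)^-1 * (qn / q) ^+ 2)).
Proof.
move=> _ Tn_gt0 le_Tn_T _ _ _.
split=> [t t_gt0 lt_t_Tn | t le_Tn_t le_t_T].
  by rewrite eps_closed_form ?(ltnW lt_t_Tn) // /share lt_t_Tn mulrA.
by rewrite eps_spending // eps_closed_form // /share ltnn mulr1.
Qed.
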